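(* Let $(H;\langle\cdot,\cdot\rangle)$ be a real inner product space and let $\{e_i\}_{i\in I}$, $\{f_j\}_{j\in J}$ be two finite orthonormal families in $H$. Let $(H_{\mathbb{C}};\langle\cdot,\cdot\rangle_{\mathbb{C}})$ be the complexification of $H$. Then for any $w\in H_{\mathbb{C}}$, setting $$T(w):=\sum_{i\in I}\langle w,e_i\rangle_{\mathbb{C}}^2+\sum_{j\in J}\langle w,f_j\rangle_{\mathbb{C}}^2-2\sum_{i\in I,\,j\in J}\langle w,e_i\rangle_{\mathbb{C}}\langle w,f_j\rangle_{\mathbb{C}}\langle e_i,f_j\rangle,$$ we have $$|T(w)|\le\frac12|\langle w,\bar w\rangle_{\mathbb{C}}|+\left|T(w)-\frac12\langle w,\bar w\rangle_{\mathbb{C}}\right|\le\frac12\Big[\|w\|_{\mathbb{C}}^2+|\langle w,\bar w\rangle_{\mathbb{C}}|\Big]\le\|w\|_{\mathbb{C}}^2.$$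
   Context: The complexification $H_{\mathbb{C}}$ of a real inner product space $H$ is the set $H\times H$ of pairs $(x,y)$ (written $x+iy$) with $(x,y)+(x',y')=(x+x',y+y')$ and $(\sigma+i\tau)(x,y)=(\sigma x-\tau y,\tau x+\sigma y)$ for $\sigma,\tau\in\mathbb{R}$, and with inner product $\langle (x,y),(x',y')\rangle_{\mathbb{C}}=\langle x,x'\rangle+\langle y,y'\rangle+i[\langle x',y\rangle-\langle x,y'\rangle]$, so $\|(x,y)\|_{\mathbb{C}}^2=\|x\|^2+\|y\|^2$. The conjugate of $w=(x,y)$ is $\bar w=(x,-y)$. A vector $e\in H$ is identified with $(e,0)\in H_{\mathbb{C}}$, so $\langle w,e_i\rangle_{\mathbb{C}}=\langle w,(e_i,0)\rangle_{\mathbb{C}}$; $\langle e_i,f_j\rangle$ is the real inner product in $H$. A family $\{e_i\}$ is orthonormal if $\langle e_i,e_j\rangle=\delta_{ij}$. *)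

From HB Require Import structures.
From mathcomp Require Import all_boot all_order all_algebra.
From mathcomp Require Import reals.
From mathcomp Require Import complex.
Set Implicit Arguments. Unset Strict Implicit. Unset Printing Implicit Defensive.
Import Order.TTheory GRing.Theory Num.Theory.
Local Open Scope ring_scope.

Definition is_inner_product (R : realType) (V : lmodType R) (ip : V -> V -> R) :=
  [/\ (forall x y, ip x y = ip y x),
      (forall a x y z, ip (a *: x + y) z = a * ip x z + ip y z),
      (forall x, 0 <= ip x x) &
      (forall x, ip x x = 0 -> x = 0)].

Definition orthonormal_family (R : realType) (V : lmodType R) (ip : V -> V -> R)
  (I : finType) (e : I -> V) :=
  forall i j, ip (e i) (e j) = (i == j)%:R.

(* Complexification H_C = H x H; the pair (x, y) stands for x + i y. *)
Definition cplx (V : Type) := (V * V)%type.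

Definition embC (R : realType) (V : lmodType R) (e : V) : cplx V := (e, 0).

Definition conjH (R : realType) (V : lmodType R) (w : cplx V) : cplx V :=
  (w.1, - w.2).

Definition ipC (R : realType) (V : lmodType R) (ip : V -> V -> R)
  (w w' : cplx V) : R[i] :=
  Complex (ip w.1 w'.1 + ip w.2 w'.2) (ip w'.1 w.2 - ip w.1 w'.2).

Definition normC2 (R : realType) (V : lmodType R) (ip : V -> V -> R)
  (w : cplx V) : R := ip w.1 w.1 + ip w.2 w.2.

Definition Tq (R : realType) (V : lmodType R) (ip : V -> V -> R)
  (I J : finType) (e : I -> V) (f : J -> V) (w : cplx V) : R[i] :=
  \sum_(i : I) ipC ip w (embC (e i)) ^+ 2 + \sum_(j : J) ipC ip w (embC (f j)) ^+ 2
  - 2 * \sum_(i : I) \sum_(j : J)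
      ipC ip w (embC (e i)) * ipC ip w (embC (f j)) * Complex (ip (e i) (f j)) 0.

From mathcomp Require Import all_boot all_order all_algebra.
From mathcomp Require Import reals.
From mathcomp Require Import complex.
From mathcomp Require Import ring lra.
Set Implicit Arguments. Unset Strict Implicit. Unset Printing Implicit Defensive.
Import Order.TTheory GRing.Theory Num.Theory.
Local Open Scope ring_scope.

(* Write [w = x + i y] and let [B(u, z) = <u, conj z>_C] be the complex-bilinear
   extension of the inner product, so that [<w, conj w>_C = B(w, w)].  With
   [D = P_e - P_f] the difference of the orthogonal projections onto the spans of
   the two families, acting componentwise on [H_C], one has [T(w) = B(D w, D w)].
   Since [D] is symmetric and [|D v| <= |v|], we get [0 <= D^2 <= 1], so [D^2 - 1/2]
   has norm at most [1/2].  Hence, by the Cauchy-Schwarz inequality for [B],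
   [|T(w) - B(w, w)/2| = |B((D^2 - 1/2) w, w)| <= |w|^2 / 2] and [|B(w, w)| <= |w|^2];
   the remaining inequalities are the triangle inequality and arithmetic. *)

Section Normc.
Variable R : rcfType.
Implicit Types (z : R[i]) (t : R).

Lemma normc_ge0 z : 0 <= Normc.normc z.
Proof. by case: z => a b; apply: sqrtr_ge0. Qed.

Lemma sqr_normc z : Normc.normc z ^+ 2 = complex.Re z ^+ 2 + complex.Im z ^+ 2.
Proof. by case: z => a b /=; rewrite sqr_sqrtr // addr_ge0 ?sqr_ge0. Qed.

Lemma normc_le_sqr z t : 0 <= t -> Normc.normc z ^+ 2 <= t ^+ 2 -> Normc.normc z <= t.
Proof. by move=> t0; rewrite ler_sqr ?nnegrE ?normc_ge0. Qed.

Lemma normcD z1 z2 : Normc.normc (z1 + z2) <= Normc.normc z1 + Normc.normc z2.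
Proof. by have /andP[_] := lec_normD z1 z2. Qed.

Lemma normc_half z : Normc.normc (z / 2) = Normc.normc z / 2.
Proof.
rewrite Normc.normcM Normc.normcV; congr (_ / _).
by rewrite /= addr0 expr0n /= addr0 sqrtr_sqr ger0_norm // -mulr2n ler0n.
Qed.

Lemma sum_Complex (K : finType) (F G : K -> R) :
  \sum_k Complex (F k) (G k) = Complex (\sum_k F k) (\sum_k G k).
Proof.
apply: (big_rec3 (fun z a b => z = Complex a b)) => // k z a b _ ->.
by [].
Qed.

End Normc.

Section InnerProduct.
Variables (R : realType) (V : lmodType R) (ip : V -> V -> R).
Hypothesis ip_inner : is_inner_product ip.

Lemma ip_sym x y : ip x y = ip y x.
Proof. by case: ip_inner => + _ _ _; apply. Qed.

Lemma ipZDl a x y z : ip (a *: x + y) z = a * ip x z + ip y z.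
Proof. by case: ip_inner => _ + _ _; apply. Qed.

Lemma ip_ge0 x : 0 <= ip x x.
Proof. by case: ip_inner => _ _ + _; apply. Qed.

Lemma ip_eq0 x : ip x x = 0 -> x = 0.
Proof. by case: ip_inner => _ _ _; apply. Qed.

Lemma ip0l z : ip 0 z = 0.
Proof. by have := ipZDl 1 0 0 z; rewrite scaler0 addr0 mul1r; lra. Qed.

Lemma ipDl x y z : ip (x + y) z = ip x z + ip y z.
Proof. by rewrite -[x]scale1r ipZDl mul1r scale1r. Qed.

Lemma ipZl a x z : ip (a *: x) z = a * ip x z.
Proof. by rewrite -[a *: x]addr0 ipZDl ip0l addr0. Qed.

Lemma ipBl x y z : ip (x - y) z = ip x z - ip y z.
Proof. by rewrite ipDl -scaleN1r ipZl mulN1r. Qed.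

Lemma ip0r z : ip z 0 = 0.
Proof. by rewrite ip_sym ip0l. Qed.

Lemma ipZr a x z : ip z (a *: x) = a * ip z x.
Proof. by rewrite ip_sym ipZl ip_sym. Qed.

Lemma ipNr x z : ip z (- x) = - ip z x.
Proof. by rewrite -scaleN1r ipZr mulN1r. Qed.

Lemma ipBr x y z : ip z (x - y) = ip z x - ip z y.
Proof. by rewrite !(ip_sym z) ipBl. Qed.

Lemma ip_suml (K : finType) (F : K -> V) z : ip (\sum_k F k) z = \sum_k ip (F k) z.
Proof. exact: (big_morph (ip^~ z) (fun x y => ipDl x y z) (ip0l z)). Qed.

Lemma ip_normD x y : ip (x + y) (x + y) = ip x x + 2 * ip x y + ip y y.
Proof. rewrite !ipDl !(ip_sym _ (x + y)) !ipDl (ip_sym y x); ring. Qed.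

Lemma ip_normB x y : ip (x - y) (x - y) = ip x x - 2 * ip x y + ip y y.
Proof. rewrite !ipBl !(ip_sym _ (x - y)) !ipBl (ip_sym y x); ring. Qed.

Section Projection.
Variables (K : finType) (e : K -> V).
Hypothesis e_orthonormal : orthonormal_family ip e.

Definition proj v := \sum_k ip v (e k) *: e k.

Lemma ip_projl a b : ip (proj a) b = \sum_k ip a (e k) * ip b (e k).
Proof. by rewrite ip_suml; apply: eq_bigr => k _; rewrite ipZl (ip_sym (e k)). Qed.

Lemma proj_sym a b : ip (proj a) b = ip a (proj b).
Proof. by rewrite (ip_sym a) !ip_projl; apply: eq_bigr => k _; rewrite mulrC. Qed.

Lemma projB a b : proj (a - b) = proj a - proj b.
Proof. by rewrite /proj -sumrB; apply: eq_bigr => k _; rewrite ipBl scalerBl. Qed.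

Lemma ip_proj_basis a k : ip (proj a) (e k) = ip a (e k).
Proof.
rewrite ip_projl (bigD1 k) //= big1 ?addr0; first by rewrite e_orthonormal eqxx mulr1.
by move=> l /negPf lk; rewrite e_orthonormal eq_sym lk mulr0.
Qed.

Lemma proj_idem a : proj (proj a) = proj a.
Proof. by apply: eq_bigr => k _; rewrite ip_proj_basis. Qed.

Lemma ip_proj_proj a b : ip (proj a) (proj b) = ip (proj a) b.
Proof. by rewrite proj_sym proj_idem proj_sym. Qed.

Lemma proj_orth a b : ip (proj a) (b - proj b) = 0.
Proof. by rewrite ipBr ip_proj_proj subrr. Qed.

Lemma proj_pythagoras a : ip a a = ip (proj a) (proj a) + ip (a - proj a) (a - proj a).
Proof.
by rewrite -{1 2}[a](subrKC (proj a)) (ip_normD (proj a)) proj_orth mulr0 addr0.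
Qed.

Lemma bessel a : ip (proj a) (proj a) <= ip a a.
Proof. by rewrite [leRHS]proj_pythagoras lerDl ip_ge0. Qed.

End Projection.

Section ProjectionDifference.
Variables (I J : finType) (e : I -> V) (f : J -> V).
Hypotheses (e_orthonormal : orthonormal_family ip e)
  (f_orthonormal : orthonormal_family ip f).

Definition dproj v := proj e v - proj f v.

Lemma dproj_sym a b : ip (dproj a) b = ip a (dproj b).
Proof. by rewrite ipBl ipBr !proj_sym. Qed.

(* [P v - Q v = P (v - Q v) - (Q v - P (Q v))], an orthogonal sum. *)
Lemma dproj_norm_le v : ip (dproj v) (dproj v) <= ip v v.
Proof.
set w := proj f v.
have dprojE : dproj v = proj e (v - w) - (w - proj e w).
  by rewrite /dproj projB opprB addrA subrK.
have orth_vw : ip (v - w) w = 0 by rewrite ip_sym proj_orth.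
have pyth_v : ip v v = ip (v - w) (v - w) + ip w w.
  by rewrite -{1 2}[v](subrK w) (ip_normD (v - w)) orth_vw mulr0 addr0.
have := proj_pythagoras e_orthonormal w; have := bessel e_orthonormal (v - w).
have := ip_ge0 (proj e w).
rewrite dprojE (ip_normB (proj e (v - w))) proj_orth //; lra.
Qed.

Definition dproj_sq_sub_half v := dproj (dproj v) - 2^-1 *: v.

(* [|D^2 v - v/2|^2 = |D^2 v|^2 - |D v|^2 + |v|^2/4] and [|D^2 v| <= |D v|]. *)
Lemma dproj_sq_sub_half_norm_le v :
  ip (dproj_sq_sub_half v) (dproj_sq_sub_half v) <= ip v v / 4.
Proof.
have := dproj_norm_le (dproj v); have := dproj_sym (dproj v) v.
rewrite /dproj_sq_sub_half (ip_normB (dproj (dproj v))) !ipZr ipZl; lra.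
Qed.

End ProjectionDifference.

Definition bil (u z : V * V) : R[i] := ipC ip u (conjH z).

Definition mapC (F : V -> V) (u : V * V) : V * V := (F u.1, F u.2).

Lemma bilE u z : bil u z = Complex (ip u.1 z.1 - ip u.2 z.2) (ip u.1 z.2 + ip u.2 z.1).
Proof. by rewrite /bil /ipC /= !ipNr opprK; congr Complex; rewrite addrC (ip_sym z.1). Qed.

Lemma bil_sym u z : bil u z = bil z u.
Proof. by rewrite !bilE; congr Complex; rewrite (ip_sym z.1) (ip_sym z.2) // addrC. Qed.

Lemma bilBl u v z : bil (u - v) z = bil u z - bil v z.
Proof. by rewrite !bilE /= !ipBl; congr Complex; ring. Qed.

Lemma bilBr u v z : bil z (u - v) = bil z u - bil z v.
Proof. by rewrite !(bil_sym z) bilBl. Qed.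

Lemma bilZl a u z : bil (a *: u) z = a%:C%C * bil u z.
Proof. by rewrite !bilE /= !ipZl; congr Complex; ring. Qed.

Lemma bil_mapC F u z : (forall a b, ip (F a) b = ip a (F b)) ->
  bil (mapC F u) z = bil u (mapC F z).
Proof. by move=> F_sym; rewrite !bilE /= !F_sym. Qed.

Lemma ipC_embC u v : ipC ip u (embC v) = Complex (ip u.1 v) (ip u.2 v).
Proof. by rewrite /ipC /= !ip0r addr0 subr0 (ip_sym v). Qed.

Lemma ipC_embC_embC a b : ipC ip (embC a) (embC b) = (ip a b)%:C%C.
Proof. by rewrite ipC_embC /= ip0l. Qed.

(* With [p + i q = bil u z] and [n = |z|^2], expand
   [|n u - (p + i q) conj z|^2 >= 0]. *)
Lemma bil_cauchy_schwarz u z :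
  Normc.normc (bil u z) ^+ 2 <= normC2 ip u * normC2 ip z.
Proof.
case: u z => [a b] [x y]; rewrite sqr_normc bilE /normC2 /=.
have [n0 | n_gt0] := eqVneq (ip x x + ip y y) 0.
  have /ip_eq0 -> : ip x x = 0 by have := ip_ge0 x; have := ip_ge0 y; lra.
  have /ip_eq0 -> : ip y y = 0 by have := ip_ge0 x; have := ip_ge0 y; lra.
  by rewrite !ip0r subrr !addr0 expr0n /= addr0 mulr0.
set n := ip x x + ip y y; set p := ip a x - ip b y; set q := ip a y + ip b x.
have n_pos : 0 < n by rewrite lt_def n_gt0 addr_ge0 ?ip_ge0.
have : 0 <= ip (n *: a - p *: x - q *: y) (n *: a - p *: x - q *: y)
          + ip (n *: b + p *: y - q *: x) (n *: b + p *: y - q *: x).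
  by rewrite addr_ge0 ?ip_ge0.
have -> : ip (n *: a - p *: x - q *: y) (n *: a - p *: x - q *: y)
          + ip (n *: b + p *: y - q *: x) (n *: b + p *: y - q *: x)
       = n * (n * (ip a a + ip b b) - (p ^+ 2 + q ^+ 2)).
  rewrite !(ipBl, ipDl, ipZl, ipBr, ipZr) !(ip_sym _ (_ + _)) !ipDl !ipZl.
  rewrite (ip_sym x a) (ip_sym y a) (ip_sym y b) (ip_sym y x).
  rewrite /p /q /n; ring.
rewrite pmulr_rge0 //; lra.
Qed.

Lemma normC2_ge0 u : 0 <= normC2 ip u.
Proof. by rewrite addr_ge0 ?ip_ge0. Qed.

Lemma normc_bil_self_le u : Normc.normc (bil u u) <= normC2 ip u.
Proof. by apply: normc_le_sqr (normC2_ge0 u) _; rewrite expr2 bil_cauchy_schwarz. Qed.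

Lemma bil_embC u v : bil u (embC v) = ipC ip u (embC v).
Proof. by rewrite /bil /conjH /embC /= oppr0. Qed.

Lemma sum_ipC_embC (K : finType) (e : K -> V) u z :
  \sum_k ipC ip u (embC (e k)) * ipC ip z (embC (e k)) = bil (mapC (proj e) u) z.
Proof.
rewrite bilE /= !ip_projl -sumrB -big_split /= -sum_Complex.
by apply: eq_bigr => k _; rewrite !ipC_embC.
Qed.

Lemma bil_proj_proj (K : finType) (e : K -> V) u z : orthonormal_family ip e ->
  bil (mapC (proj e) u) (mapC (proj e) z) = bil (mapC (proj e) u) z.
Proof.
move=> e_orthonormal; rewrite !(bil_mapC _ _ (proj_sym e)).
by rewrite /mapC /= !proj_idem.
Qed.

Section ComplexifiedProjections.
Variables (I J : finType) (e : I -> V) (f : J -> V).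
Hypotheses (e_orthonormal : orthonormal_family ip e)
  (f_orthonormal : orthonormal_family ip f).

Lemma Tq_bil w : Tq ip e f w = bil (mapC (dproj e f) w) (mapC (dproj e f) w).
Proof.
have sum_sqr (K : finType) (g : K -> V) :
    \sum_k ipC ip w (embC (g k)) ^+ 2 = bil (mapC (proj g) w) w.
  by rewrite -sum_ipC_embC; apply: eq_bigr => k _; rewrite expr2.
have sum_cross : \sum_i \sum_j ipC ip w (embC (e i)) * ipC ip w (embC (f j))
                   * Complex (ip (e i) (f j)) 0
               = bil (mapC (proj e) w) (mapC (proj f) w).
  rewrite -sum_ipC_embC; apply: eq_bigr => i _.
  rewrite -(bil_embC (mapC (proj f) w)) -sum_ipC_embC mulr_sumr.
  by apply: eq_bigr => j _; rewrite ipC_embC_embC mulrA.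
have -> : mapC (dproj e f) w = mapC (proj e) w - mapC (proj f) w by [].
rewrite /Tq !sum_sqr sum_cross !(bilBl, bilBr) !bil_proj_proj //.
rewrite (bil_sym (mapC (proj f) w) (mapC (proj e) w)); ring.
Qed.

Lemma Tq_sub_half w : Tq ip e f w - bil w w / 2 = bil (mapC (dproj_sq_sub_half e f) w) w.
Proof.
have -> : mapC (dproj_sq_sub_half e f) w = mapC (dproj e f) (mapC (dproj e f) w) - 2^-1 *: w.
  by [].
rewrite Tq_bil -bil_mapC; last exact: dproj_sym.
by rewrite bilBl bilZl fmorphV rmorph_nat mulrC.
Qed.

Lemma normc_Tq_sub_half_le w :
  Normc.normc (Tq ip e f w - bil w w / 2) <= normC2 ip w / 2.
Proof.
have n_ge0 := normC2_ge0 w.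
rewrite Tq_sub_half; apply: normc_le_sqr; first lra.
apply: le_trans (bil_cauchy_schwarz _ _) _.
have := dproj_sq_sub_half_norm_le e_orthonormal f_orthonormal w.1.
have := dproj_sq_sub_half_norm_le e_orthonormal f_orthonormal w.2.
rewrite /normC2 /= in n_ge0 *; nra.
Qed.

End ComplexifiedProjections.

End InnerProduct.

Theorem theorem3p1 (R : realType) (V : lmodType R) (ip : V -> V -> R)
  (I J : finType) (e : I -> V) (f : J -> V) :
  is_inner_product ip ->
  orthonormal_family ip e -> orthonormal_family ip f ->
  forall w : cplx V,
    let T := Tq ip e f w in
    let c := ipC ip w (conjH w) in
    [/\ Normc.normc T <= Normc.normc c / 2 + Normc.normc (T - c / 2),
        Normc.normc c / 2 + Normc.normc (T - c / 2) <= (normC2 ip w + Normc.normc c) / 2 &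
        (normC2 ip w + Normc.normc c) / 2 <= normC2 ip w].
Proof.
move=> ip_inner e_orthonormal f_orthonormal w T c.
have c_le : Normc.normc c <= normC2 ip w := normc_bil_self_le ip_inner w.
have T_sub_le : Normc.normc (T - c / 2) <= normC2 ip w / 2 :=
  normc_Tq_sub_half_le ip_inner e_orthonormal f_orthonormal w.
split; [|lra|lra].
by rewrite -normc_half -[X in Normc.normc X <= _](subrKC (c / 2)) normcD.
Qed.
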